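(* Let $G=\langle \Sigma_\tau, Q, \rightarrow, Q^0\rangle$ be a nondeterministic automaton with set of secret states $Q^S\subseteq Q$ and non-secret states $Q^{NS}=Q\setminus Q^S$. Let $\sim_o$ be an opaque observation equivalence on $G$ with respect to $Q^S$, and let $\tilde G$ be the quotient automaton of $G$ modulo $\sim_o$, with secret states $\tilde Q^S=\{[x]\mid x\in Q^S\}$. Then $det(G)$ and $det(\tilde G)$ are bisimilar, and $det_d(G)$ and $det_d(\tilde G)$ are bisimilar.
   Context: Automata: A (nondeterministic) automaton is $G=\langle \Sigma_\tau, Q,\rightarrow, Q^0\rangle$ where $\Sigma$ is a finite set of observable events, $\tau\notin\Sigma$ is a special symbol standing for every unobservable event, $\Sigma_\tau=\Sigma\cup\{\tau\}$, $Q$ is a finite state set, $\rightarrow\subseteq Q\times\Sigma_\tau\times Q$, and $Q^0\subseteq Q$ is the set of initial states. $G$ is deterministic if $|Q^0|=1$, it has no $\tau$-transitions, and $x\xrightarrow{\sigma}y_1$, $x\xrightarrow{\sigma}y_2$ imply $y_1=y_2$. For $s\in\Sigma^*$, $p\overset{s}{\Rightarrow}q$ means that there is a path from $p$ to $q$ whose label sequence, after deleting all occurrences of $\tau$, equals $s$ (for $s=\varepsilon$ this means a path consisting of zero or more $\tau$-transitions). Observer: for $B\subseteq Q$, $UR(B)=\{q\in Q\mid b\overset{\varepsilon}{\Rightarrow}q \text{ for some } b\in B\}$. The observer $det(G)=\langle\Sigma,X_{obs},\rightarrow_{obs},X^0_{obs}\rangle$ is the deterministic automaton with initial state $X^0_{obs}=UR(Q^0)$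 and transitions $X\xrightarrow{\sigma}_{obs}Y$ iff $Y=UR(\{y\mid x\xrightarrow{\sigma}y\text{ for some }x\in X\})\neq\emptyset$; $X_{obs}\subseteq 2^Q$ consists of the states reachable from $X^0_{obs}$. Secret states and desired observer: the state set is partitioned into secret states $Q^S$ and non-secret states $Q^{NS}=Q\setminus Q^S$. The desired observer $det_d(G)$ is obtained from $det(G)$ by deleting every observer state $X$ with $X\subseteq Q^S$ (together with its incident transitions) and keeping only the part reachable from the initial state. Quotient: for an equivalence relation $\sim$ on $Q$ with classes $[x]$, the quotient automaton is $\tilde G=\langle\Sigma_\tau,\{[x]\mid x\in Q\},\rightarrow_{/\sim},\{[x^0]\mid x^0\in Q^0\}\rangle$ with $[x]\xrightarrow{\sigma}_{/\sim}[y]$ iff $x'\xrightarrow{\sigma}y'$ for some $x'\in[x]$, $y'\in[y]$. Opaque observation equivalence: an equivalence relation $\sim_o\subseteq Q\times Q$ such that for all $x_1\sim_o x_2$: (i) if $x_1\overset{s}{\Rightarrow}y_1$ for some $s\in\Sigma^*$ then there is $y_2$ with $x_2\overset{s}{\Rightarrow}y_2$ and $y_1\sim_o y_2$; (ii) $x_1\in Q^S$ iff $x_2\in Q^S$. Bisimilarity: two automata $A_1,A_2$ over the same alphabet are bisimilar if there is a relation $R$ between their state sets relating every initial state of each to some initial state of the other, such that whenever $(p_1,p_2)\in R$ and $p_1\xrightarrow{\sigma}q_1$ there is $q_2$ with $p_2\xrightarrow{\sigma}q_2$ and $(q_1,q_2)\in R$, and symmetrically. *)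

From mathcomp Require Import all_boot.
Set Implicit Arguments. Unset Strict Implicit. Unset Printing Implicit Defensive.

(* An automaton over observable alphabet Sigma (finite):
   states Q : finType, events option Sigma (None = tau),
   transition relation tr : Q -> option Sigma -> Q -> bool, initial set Q0. *)

Section Automata.
Variable Sigma : finType.

Record lts := Lts {
  lts_state : Type;
  lts_init : lts_state -> Prop;
  lts_step : lts_state -> Sigma -> lts_state -> Prop }.

Definition bisimilar (A1 A2 : lts) : Prop :=
  exists R : lts_state A1 -> lts_state A2 -> Prop,
    (forall p1, lts_init p1 -> exists2 p2, lts_init p2 & R p1 p2) /\
    (forall p2, lts_init p2 -> exists2 p1, lts_init p1 & R p1 p2) /\
    (forall p1 p2 s q1, R p1 p2 -> lts_step p1 s q1 ->
        exists2 q2, lts_step p2 s q2 & R q1 q2) /\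
    (forall p1 p2 s q2, R p1 p2 -> lts_step p2 s q2 ->
        exists2 q1, lts_step p1 s q1 & R q1 q2).

Section OneAutomaton.
Variable Q : finType.
Variable tr : Q -> option Sigma -> Q -> bool.

Inductive lpath : Q -> seq (option Sigma) -> Q -> Prop :=
| lpath_nil p : lpath p [::] p
| lpath_cons p a q l r : tr p a q -> lpath q l r -> lpath p (a :: l) r.

(* pmap id deletes all occurrences of tau (= None). *)
Definition wtrans (p : Q) (s : seq Sigma) (q : Q) : Prop :=
  exists2 l, lpath p l q & pmap id l = s.

Definition UR (B : {set Q}) : {set Q} :=
  [set q | [exists b in B, connect (fun p p' => tr p None p') b q]].

Definition post (X : {set Q}) (a : Sigma) : {set Q} :=
  [set y | [exists x in X, tr x (Some a) y]].

Definition obs_step (X : {set Q}) (a : Sigma) (Y : {set Q}) : bool :=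
  (Y == UR (post X a)) && (Y != set0).

Variable Q0 : {set Q}.

Definition obs_init : {set Q} := UR Q0.

Definition obs_reach (X : {set Q}) : bool :=
  connect (fun X Y => [exists a, obs_step X a Y]) obs_init X.

Definition det : lts :=
  @Lts {X : {set Q} | obs_reach X}
       (fun X => val X = obs_init)
       (fun X a Y => obs_step (val X) a (val Y)).

Variable QS : {set Q}.

Definition obs_ok (X : {set Q}) : bool := ~~ (X \subset QS).

Definition obs_step_d (X Y : {set Q}) : bool :=
  [&& obs_ok X, obs_ok Y & [exists a, obs_step X a Y]].

Definition obs_reach_d (X : {set Q}) : bool :=
  [&& obs_ok obs_init, obs_ok X & connect obs_step_d obs_init X].

Definition det_d : lts :=
  @Lts {X : {set Q} | obs_reach_d X}
       (fun X => val X = obs_init)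
       (fun X a Y => obs_step (val X) a (val Y)).

Definition opaque_obs_equiv (eqv : rel Q) : Prop :=
  [/\ (forall x, eqv x x),
      (forall x y, eqv x y -> eqv y x),
      (forall x y z, eqv x y -> eqv y z -> eqv x z),
      (forall x1 x2 s y1, eqv x1 x2 -> wtrans x1 s y1 ->
          exists2 y2, wtrans x2 s y2 & eqv y1 y2)
    & (forall x1 x2, eqv x1 x2 -> (x1 \in QS) = (x2 \in QS))].

Variable eqv : rel Q.

Definition eclass (x : Q) : {set Q} := [set y | eqv x y].

Definition is_class (C : {set Q}) : bool := [exists x, C == eclass x].

Definition qstate : finType := {C : {set Q} | is_class C}.

Definition qtr (C : qstate) (a : option Sigma) (D : qstate) : bool :=
  [exists x in val C, exists y in val D, tr x a y].

Definition qinit : {set qstate} :=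
  [set C | [exists x0 in Q0, val C == eclass x0]].

Definition qsecret : {set qstate} :=
  [set C | [exists x in QS, val C == eclass x]].

End OneAutomaton.
End Automata.

Arguments qtr [Sigma Q] tr eqv C a D.

From mathcomp Require Import all_boot.
Set Implicit Arguments. Unset Strict Implicit. Unset Printing Implicit Defensive.

(* The map X |-> [X] (= qinit X eqv) sending a set of states to the set of their classes
   commutes with the observer construction: since ~o is a weak simulation,
   the weak s-successors of [B] in the quotient are exactly the classes of
   the weak s-successors of B.  It also preserves emptiness and, because ~o
   respects secrecy, containment in the secret states.  Hence the relation
   "Y = [X]" between reachable observer states is a bisimulation, both for
   the full and for the desired observers. *)

Section WeakTransitions.
Variables (Sigma Q : finType) (tr : Q -> option Sigma -> Q -> bool).

Lemma lpath_cat x l1 y l2 z :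
  lpath tr x l1 y -> lpath tr y l2 z -> lpath tr x (l1 ++ l2) z.
Proof. by elim=> [//|p a q l r Hpq _ IH] /IH; apply: lpath_cons Hpq. Qed.

Lemma wtrans_cat x s1 y s2 z :
  wtrans tr x s1 y -> wtrans tr y s2 z -> wtrans tr x (s1 ++ s2) z.
Proof.
case=> l1 Hl1 <- [l2 Hl2 <-]; exists (l1 ++ l2); last by rewrite pmap_cat.
exact: lpath_cat Hl1 Hl2.
Qed.

Lemma wtrans_nil x : wtrans tr x [::] x.
Proof. by exists [::]; first exact: lpath_nil. Qed.

Lemma wtrans1 x a y : tr x a y -> wtrans tr x (pmap id [:: a]) y.
Proof. by move=> Hxy; exists [:: a]; first exact: lpath_cons Hxy (lpath_nil _ _). Qed.

Lemma wtrans_cons_inv x a s z :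
  wtrans tr x (a :: s) z ->
  exists x1, exists2 x2, wtrans tr x [::] x1 /\ tr x1 (Some a) x2 & wtrans tr x2 s z.
Proof.
case=> l Hl; elim: Hl a s => [//|p [b|] q l' r Hpq Hl' IH] a s /=.
  by case=> <- <-; exists p; exists q; [split; first exact: wtrans_nil | exists l'].
move/IH=> [x1 [x2 [Hqx1 Hx1x2] Hx2z]]; exists x1; exists x2 => //; split=> //.
exact: wtrans_cat (wtrans1 Hpq) Hqx1.
Qed.

Lemma connect_tau_wtrans x y :
  connect (fun p p' => tr p None p') x y <-> wtrans tr x [::] y.
Proof.
split.
  case/connectP=> p + ->; elim: p x => [|z p IH] x /=; first by move=> _; apply: wtrans_nil.
  by case/andP=> Hxz /IH; apply: (wtrans_cat (wtrans1 Hxz)).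
case=> l Hl; elim: Hl => [p _|p [a|] q l0 r Hpq _ IH] //=.
by move/IH; apply: connect_trans (connect1 Hpq).
Qed.

Lemma mem_UR B q : q \in UR tr B <-> exists2 b, b \in B & wtrans tr b [::] q.
Proof.
rewrite inE; split; first by case/exists_inP=> b Hb /connect_tau_wtrans; exists b.
by case=> b Hb /connect_tau_wtrans Hbq; apply/exists_inP; exists b.
Qed.

Lemma UR_id B : UR tr (UR tr B) = UR tr B.
Proof.
apply/setP=> q; apply/idP/idP; last by move=> Hq; apply/mem_UR; exists q; last exact: wtrans_nil.
case/mem_UR=> p /mem_UR [b Hb Hbp] Hpq; apply/mem_UR; exists b => //.
exact: (wtrans_cat Hbp Hpq).
Qed.

Lemma mem_UR_post_UR B a q :
  q \in UR tr (post tr (UR tr B) a) <-> exists2 b, b \in B & wtrans tr b [:: a] q.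
Proof.
split.
  case/mem_UR=> p; rewrite inE => /exists_inP [x /mem_UR [b Hb Hbx] Hxp] Hpq.
  by exists b => //; apply: (wtrans_cat Hbx (wtrans_cat (wtrans1 Hxp) Hpq)).
case=> b Hb /wtrans_cons_inv [x1 [x2 [Hbx1 Hx1x2] Hx2q]].
apply/mem_UR; exists x2 => //; rewrite inE; apply/exists_inP; exists x1 => //.
by apply/mem_UR; exists b.
Qed.

End WeakTransitions.

Section Reachability.
Variables (Sigma Q : finType) (tr : Q -> option Sigma -> Q -> bool) (Q0 QS : {set Q}).

Lemma obs_step_UR X a Y : obs_step tr X a Y -> UR tr Y = Y.
Proof. by case/andP=> /eqP -> _; rewrite UR_id. Qed.

Lemma obs_reach_init : obs_reach tr Q0 (obs_init tr Q0).
Proof. exact: connect0. Qed.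

Lemma obs_reach_step X a Y :
  obs_reach tr Q0 X -> obs_step tr X a Y -> obs_reach tr Q0 Y.
Proof. by move=> HX HXY; apply: connect_trans HX (connect1 _); apply/existsP; exists a. Qed.

Lemma obs_reach_d_init : obs_reach_d tr Q0 QS (obs_init tr Q0) = obs_ok QS (obs_init tr Q0).
Proof. by rewrite /obs_reach_d connect0 andbT; case: obs_ok. Qed.

Lemma obs_reach_d_stepE X a Y :
  obs_reach_d tr Q0 QS X -> obs_step tr X a Y -> obs_reach_d tr Q0 QS Y = obs_ok QS Y.
Proof.
case/and3P=> ok0 okX HX HXY; apply/idP/idP; first by case/and3P.
move=> okY; rewrite /obs_reach_d ok0 okY; apply: connect_trans HX (connect1 _).
by rewrite /obs_step_d okX okY; apply/existsP; exists a.
Qed.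

End Reachability.

Section ObserverMap.
Variables (Sigma Q Q' : finType).
Variables (tr : Q -> option Sigma -> Q -> bool) (tr' : Q' -> option Sigma -> Q' -> bool).
Variables (Q0 : {set Q}) (Q0' : {set Q'}) (f : {set Q} -> {set Q'}).
Hypothesis f_init : obs_init tr' Q0' = f (obs_init tr Q0).
Hypothesis f_UR_post :
  forall B a, UR tr' (post tr' (f (UR tr B)) a) = f (UR tr (post tr (UR tr B) a)).
Hypothesis f_eq0 : forall X, (f X == set0) = (X == set0).

(* [det] and [det_d] are, up to conversion, [obs_lts] for [obs_reach] and
   [obs_reach_d]. *)
Definition obs_lts (Q1 : finType) (tr1 : Q1 -> option Sigma -> Q1 -> bool)
    (I : {set Q1}) (P : pred {set Q1}) : lts Sigma :=
  @Lts Sigma {X | P X} (fun X => val X = obs_init tr1 I)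
       (fun X a Y => obs_step tr1 (val X) a (val Y)).

Lemma f_UR_post_closed X a :
  UR tr X = X -> UR tr' (post tr' (f X) a) = f (UR tr (post tr X a)).
Proof. by move=> HX; rewrite -HX f_UR_post. Qed.

Lemma obs_step_map X a Y :
  UR tr X = X -> obs_step tr X a Y -> obs_step tr' (f X) a (f Y).
Proof. by move=> HX /andP [/eqP -> HY]; rewrite /obs_step f_UR_post_closed // eqxx f_eq0. Qed.

Lemma obs_step_map_inv X a Y' :
  UR tr X = X -> obs_step tr' (f X) a Y' -> exists2 Y, obs_step tr X a Y & Y' = f Y.
Proof.
move=> HX /andP [/eqP ->]; rewrite f_UR_post_closed // f_eq0 => HY.
by exists (UR tr (post tr X a)); rewrite // /obs_step eqxx.
Qed.

Lemma bisimilar_obs_lts (P : pred {set Q}) (P' : pred {set Q'}) :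
  P' (obs_init tr' Q0') = P (obs_init tr Q0) ->
  (forall X a Y, UR tr X = X -> P X -> P' (f X) -> obs_step tr X a Y ->
     P' (f Y) = P Y) ->
  bisimilar (obs_lts tr Q0 P) (obs_lts tr' Q0' P').
Proof.
rewrite /obs_lts => P_init P_step.
have init_UR : UR tr (obs_init tr Q0) = obs_init tr Q0 by rewrite UR_id.
exists (fun p1 p2 => val p2 = f (val p1) /\ UR tr (val p1) = val p1).
split; [|split; [|split]].
- case=> X HX /= EX; have HX' : P' (obs_init tr' Q0') by rewrite P_init -EX.
  by exists (exist _ (obs_init tr' Q0') HX') => //=; rewrite EX f_init.
- case=> X' HX' /= EX'; have HX : P (obs_init tr Q0) by rewrite -P_init -EX'.
  by exists (exist _ (obs_init tr Q0) HX) => //=; rewrite EX' f_init.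
- case=> X HX [X' HX'] a [Y HY] /= [EX' UX] HXY; subst X'.
  have HfY : P' (f Y) by rewrite (P_step X a).
  exists (exist _ (f Y) HfY); last by split; last exact: obs_step_UR HXY.
  exact: obs_step_map.
- case=> X HX [X' HX'] a [Y' HY'] /= [EX' UX]; subst X'.
  case/obs_step_map_inv=> [//|Y HXY EY'].
  have HY : P Y by rewrite -(P_step X a) // -EY'.
  by exists (exist _ Y HY) => //=; split; last exact: obs_step_UR HXY.
Qed.

End ObserverMap.

Section Quotient.
Variables (Sigma Q : finType) (tr : Q -> option Sigma -> Q -> bool) (eqv : rel Q).
Hypothesis eqv_refl : forall x, eqv x x.
Hypothesis eqv_sym : forall x y, eqv x y -> eqv y x.
Hypothesis eqv_trans : forall x y z, eqv x y -> eqv y z -> eqv x z.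
Hypothesis eqv_wsim : forall x1 x2 s y1, eqv x1 x2 -> wtrans tr x1 s y1 ->
  exists2 y2, wtrans tr x2 s y2 & eqv y1 y2.

Local Notation qtr_ := (qtr tr eqv).

Lemma eclass_eq x y : eqv x y -> eclass eqv x = eclass eqv y.
Proof.
move=> Hxy; apply/setP=> z; rewrite !inE; apply/idP/idP; last exact: eqv_trans.
exact: eqv_trans (eqv_sym Hxy).
Qed.

Lemma eqv_of_eclass_eq x y : eclass eqv x = eclass eqv y -> eqv x y.
Proof.
move=> Exy; have : y \in eclass eqv y by rewrite inE.
by rewrite -Exy inE.
Qed.

Lemma qstate_eclass (C : qstate eqv) y : y \in val C -> val C = eclass eqv y.
Proof. by case: C => C /existsP [x /eqP EC] /=; rewrite EC inE; apply: eclass_eq. Qed.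

Lemma is_class_eclass x : is_class eqv (eclass eqv x).
Proof. by apply/existsP; exists x. Qed.

Definition qclass (x : Q) : qstate eqv := exist _ (eclass eqv x) (is_class_eclass x).

Lemma lpath_qclass x l y : lpath tr x l y -> lpath qtr_ (qclass x) l (qclass y).
Proof.
elim=> [p|p a q l' r Hpq _ IH]; first exact: lpath_nil.
apply: lpath_cons IH; apply/exists_inP; exists p; first by rewrite inE.
by apply/exists_inP; exists q; first by rewrite inE.
Qed.

(* The converse direction is where the weak simulation property is used:
   each quotient transition is matched, up to ~o, from any representative. *)
Lemma qpath_lift C l D x : lpath qtr_ C l D -> val C = eclass eqv x ->
  exists2 y, wtrans tr x (pmap id l) y & val D = eclass eqv y.
Proof.
move=> HCD; elim: HCD x => [p|p a q l' r Hpq _ IH] x Hp.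
  by exists x => //; apply: wtrans_nil.
case/exists_inP: Hpq => x' Hx' /exists_inP [y' Hy' Hx'y'].
have Hxx' : eqv x x' by move: Hx'; rewrite Hp inE.
have [y2 Hxy2 Hy'y2] := eqv_wsim (eqv_sym Hxx') (wtrans1 Hx'y').
have [|y Hy2y ->] := IH y2; first by rewrite (qstate_eclass Hy') (eclass_eq Hy'y2).
have -> : pmap id (a :: l') = pmap id [:: a] ++ pmap id l' by case: a {Hxy2 Hx'y'}.
by exists y => //; apply: wtrans_cat Hxy2 Hy2y.
Qed.

Lemma qinit_wtrans B s C :
  (exists2 D, D \in qinit B eqv & wtrans qtr_ D s C) <->
  (exists2 y, (exists2 b, b \in B & wtrans tr b s y) & val C = eclass eqv y).
Proof.
split.
  case=> D; rewrite inE => /exists_inP [b Hb /eqP HD] [l Hl <-].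
  by have [y Hby Hy] := qpath_lift Hl HD; exists y => //; exists b.
case=> y [b Hb [l Hl <-]] HC; exists (qclass b).
  by rewrite inE; apply/exists_inP; exists b.
have -> : C = qclass y by apply: val_inj.
by exists l => //; apply: lpath_qclass.
Qed.

Lemma qinit_wreach (QB : {set qstate eqv}) (B Y : {set Q}) s :
  (forall C, C \in QB <-> exists2 D, D \in qinit B eqv & wtrans qtr_ D s C) ->
  (forall y, y \in Y <-> exists2 b, b \in B & wtrans tr b s y) ->
  QB = qinit Y eqv.
Proof.
move=> memQB memY; apply/setP=> C; rewrite [in RHS]inE.
apply/idP/exists_inP.
  by case/memQB/qinit_wtrans=> y /memY Hy ->; exists y.
by case=> y /memY Hy /eqP HC; apply/memQB/qinit_wtrans; exists y.
Qed.

Lemma UR_qinit B : UR qtr_ (qinit B eqv) = qinit (UR tr B) eqv.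
Proof. by apply: (qinit_wreach (s := [::])) => ?; apply: mem_UR. Qed.

Lemma UR_post_qinit B a :
  UR qtr_ (post qtr_ (qinit (UR tr B) eqv) a) =
  qinit (UR tr (post tr (UR tr B) a)) eqv.
Proof.
by rewrite -UR_qinit; apply: (qinit_wreach (s := [:: a])) => ?; apply: mem_UR_post_UR.
Qed.

Lemma qinit_eq0 X : (qinit X eqv == set0) = (X == set0).
Proof.
apply: negb_inj; apply/set0Pn/set0Pn => [[C]|[x Hx]].
  by rewrite inE => /exists_inP [x Hx _]; exists x.
by exists (qclass x); rewrite inE; apply/exists_inP; exists x.
Qed.

Variable QS : {set Q}.
Hypothesis eqv_secret : forall x1 x2, eqv x1 x2 -> (x1 \in QS) = (x2 \in QS).

Lemma qinit_subset_qsecret X :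
  (qinit X eqv \subset qsecret QS eqv) = (X \subset QS).
Proof.
apply/subsetP/subsetP => HX.
  move=> x Hx; have : qclass x \in qsecret QS eqv.
    by apply: HX; rewrite inE; apply/exists_inP; exists x.
  by rewrite inE => /exists_inP [z Hz /eqP /eqv_of_eclass_eq /eqv_secret ->].
move=> C; rewrite !inE => /exists_inP [x Hx HC]; apply/exists_inP; exists x => //.
exact: HX.
Qed.

Lemma obs_ok_qinit X : obs_ok (qsecret QS eqv) (qinit X eqv) = obs_ok QS X.
Proof. by rewrite /obs_ok qinit_subset_qsecret. Qed.

End Quotient.

Theorem proposition1 (Sigma Q : finType) (tr : Q -> option Sigma -> Q -> bool)
  (Q0 QS : {set Q}) (eqv : rel Q) :
  opaque_obs_equiv tr QS eqv ->
  bisimilar (det tr Q0) (det (qtr tr eqv) (qinit Q0 eqv)) /\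
  bisimilar (det_d tr Q0 QS)
            (det_d (qtr tr eqv) (qinit Q0 eqv) (qsecret QS eqv)).
Proof.
case=> refl sym trans wsim secret.
have f_init : obs_init (qtr tr eqv) (qinit Q0 eqv) = qinit (obs_init tr Q0) eqv.
  exact: UR_qinit.
have f_UR_post := UR_post_qinit refl sym trans wsim.
have f_ok := obs_ok_qinit refl secret.
split; apply: (bisimilar_obs_lts f_init f_UR_post (qinit_eq0 eqv)).
- by rewrite !obs_reach_init.
- move=> X a Y UX HX HfX HXY.
  have HfXY := obs_step_map f_UR_post (qinit_eq0 eqv) UX HXY.
  by rewrite (obs_reach_step HX HXY) (obs_reach_step HfX HfXY).
- by rewrite !obs_reach_d_init f_init f_ok.
- move=> X a Y UX HX HfX HXY.
  have HfXY := obs_step_map f_UR_post (qinit_eq0 eqv) UX HXY.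
  by rewrite (obs_reach_d_stepE HX HXY) (obs_reach_d_stepE HfX HfXY) f_ok.
Qed.
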